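(* Let $\mathcal{F}$ be a compact (in the uniform norm) family of uniformly bounded real-valued Lipschitz functions on $[0,1]$ such that $\int_0^{1/2} f < \int_{1/2}^1 f$ for every $f \in \mathcal{F}$. Then there exist $M, \epsilon > 0$ such that for all integers $m > M$, all integers $m_* \in ((\frac{1}{2}-\epsilon)m, (\frac{1}{2}+\epsilon)m)$, and all $f \in \mathcal{F}$, $$\sum_{j=1}^{m_*} \frac{1}{\log^2(j+3)}f\left(\frac{j}{m}\right) < \sum_{j=m_*+1}^m \frac{1}{\log^2(j+3)}f\left(\frac{j}{m}\right).$$
   Context: $\log$ denotes the natural logarithm. *)

From Stdlib Require Import Reals List.
From Coquelicot Require Import Coquelicot.
Open Scope R_scope.

(* Real-valued functions on [0,1] are represented as total functions R -> R;
   only their values on [0,1] matter. *)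

(* [sum_from_to a b g] = g a + g (a+1) + ... + g b  (empty, i.e. 0, if b < a). *)
Definition sum_from_to (a b : nat) (g : nat -> R) : R :=
  fold_right Rplus 0 (map g (seq a (S b - a))).

Definition lipschitz01 (f : R -> R) : Prop :=
  exists L : R, forall x y : R, 0 <= x <= 1 -> 0 <= y <= 1 ->
    Rabs (f x - f y) <= L * Rabs (x - y).

(* Uniform (sup-norm on [0,1]) ball: sup_{x in [0,1]} |f x - g x| < r. *)
Definition unif_ball (f : R -> R) (r : R) (g : R -> R) : Prop :=
  exists r', r' < r /\ forall x : R, 0 <= x <= 1 -> Rabs (f x - g x) <= r'.

Definition unif_open (U : (R -> R) -> Prop) : Prop :=
  forall f, U f -> exists r, 0 < r /\ forall g, unif_ball f r g -> U g.

Definition unif_compact (F : (R -> R) -> Prop) : Prop :=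
  forall (I : Type) (U : I -> (R -> R) -> Prop),
    (forall i, unif_open (U i)) ->
    (forall f, F f -> exists i, U i f) ->
    exists l : list I, forall f, F f -> exists i, In i l /\ U i f.

Definition wsum (f : R -> R) (m a b : nat) : R :=
  sum_from_to a b (fun j => / (ln (INR j + 3)) ^ 2 * f (INR j / INR m)).

From Stdlib Require Import Reals List Lra Lia Classical.
From Coquelicot Require Import Coquelicot.
Open Scope R_scope.

(* The weights w_j = 1 / ln^2 (j + 3) are asymptotically flat:
   sum_{j <= m} (w_j - w_m) = o(m w_m), because only the j below (m + 3)^(1 - δ)
   have ln (j + 3) noticeably smaller than ln (m + 3), and there are o(m / ln^2 m)
   of them.  Hence each weighted sum is w_m times the unweighted Riemann sum, up to
   o(m w_m).  For a Lipschitz f the unweighted sums are m times the integrals over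
   [0, m*/m] and [m*/m, 1] up to O(1), and m*/m is close to 1/2, so their difference
   is about m (int_{1/2}^1 f - int_0^{1/2} f) > 0.  This margin survives a uniform
   perturbation of f by a quarter of the gap, and compactness lets finitely many
   such neighbourhoods, with their thresholds M and ε, cover the family. *)

Definition lsum (l : list nat) (g : nat -> R) : R := fold_right Rplus 0 (map g l).

Lemma lsum_app l1 l2 g : lsum (l1 ++ l2) g = lsum l1 g + lsum l2 g.
Proof. induction l1 as [|a l1 IH]; unfold lsum in *; simpl; [lra | rewrite IH; lra]. Qed.

Lemma lsum_plus l g h : lsum l (fun j => g j + h j) = lsum l g + lsum l h.
Proof. induction l as [|a l IH]; unfold lsum in *; simpl; [lra | rewrite IH; lra]. Qed.

Lemma lsum_minus l g h : lsum l (fun j => g j - h j) = lsum l g - lsum l h.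
Proof. induction l as [|a l IH]; unfold lsum in *; simpl; [lra | rewrite IH; lra]. Qed.

Lemma lsum_scal l c g : lsum l (fun j => c * g j) = c * lsum l g.
Proof. induction l as [|a l IH]; unfold lsum in *; simpl; [lra | rewrite IH; lra]. Qed.

Lemma lsum_const l c : lsum l (fun _ => c) = INR (length l) * c.
Proof.
  induction l as [|a l IH]; unfold lsum in *; cbn [length map fold_right]; [simpl; lra|].
  rewrite IH, S_INR; lra.
Qed.

Lemma lsum_le l g h : (forall j, In j l -> g j <= h j) -> lsum l g <= lsum l h.
Proof.
  induction l as [|a l IH]; unfold lsum in *; simpl; intros H; [lra|].
  pose proof (H a (or_introl eq_refl)).
  assert (fold_right Rplus 0 (map g l) <= fold_right Rplus 0 (map h l))
    by (apply IH; auto).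
  lra.
Qed.

Lemma lsum_abs l g : Rabs (lsum l g) <= lsum l (fun j => Rabs (g j)).
Proof.
  induction l as [|a l IH]; unfold lsum in *; simpl; [rewrite Rabs_R0; lra|].
  eapply Rle_trans; [apply Rabs_triang | lra].
Qed.

Lemma lsum_indicator_le n X : 0 <= X ->
  lsum (seq 1 n) (fun j => if Rlt_dec (INR j) X then 1 else 0) <= X.
Proof.
  intros HX.
  enough (lsum (seq 1 n) (fun j => if Rlt_dec (INR j) X then 1 else 0) <= Rmin (INR n) X)
    by (pose proof (Rmin_r (INR n) X); lra).
  induction n as [|n IH]; [unfold lsum, Rmin; simpl; destruct Rle_dec; lra|].
  rewrite seq_S, lsum_app. replace (1 + n)%nat with (S n) by lia.
  unfold lsum at 2; cbn [map fold_right]. rewrite S_INR in *.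
  unfold Rmin in *; repeat destruct Rle_dec; destruct Rlt_dec; lra.
Qed.

Definition weight (j : nat) : R := / ln (INR j + 3) ^ 2.

Lemma ln_shift3_ge1 j : 1 <= ln (INR j + 3).
Proof.
  rewrite <- (ln_exp 1) at 1. pose proof (pos_INR j). pose proof exp_le_3.
  apply ln_le; [apply exp_pos | lra].
Qed.

Lemma weight_pos j : 0 < weight j.
Proof. pose proof (ln_shift3_ge1 j). apply Rinv_0_lt_compat; nra. Qed.

Lemma weight_le1 j : weight j <= 1.
Proof.
  pose proof (ln_shift3_ge1 j). unfold weight. rewrite <- Rinv_1.
  apply Rinv_le_contravar; nra.
Qed.

Lemma weight_antimono i j : (i <= j)%nat -> weight j <= weight i.
Proof.
  intros Hij. apply le_INR in Hij. pose proof (pos_INR i).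
  pose proof (ln_shift3_ge1 i).
  assert (ln (INR i + 3) <= ln (INR j + 3)) by (apply ln_le; lra).
  apply Rinv_le_contravar; nra.
Qed.

Lemma inv_sqr_le_scaled x y c : 0 < x -> 0 < y -> y ^ 2 <= c * x ^ 2 -> / x ^ 2 <= c * / y ^ 2.
Proof.
  intros Hx Hy H.
  replace (/ x ^ 2) with (y ^ 2 * (/ x ^ 2 * / y ^ 2)) by (field; lra).
  replace (c * / y ^ 2) with (c * x ^ 2 * (/ x ^ 2 * / y ^ 2)) by (field; lra).
  apply Rmult_le_compat_r; [|exact H].
  apply Rmult_le_pos; left; apply Rinv_0_lt_compat; nra.
Qed.

(* Below the threshold weight j <= 1; above it ln (j + 3) > (1 - δ) ln (m + 3). *)
Lemma weight_sub_le (m j : nat) δ : 0 < δ <= 1/2 -> (1 <= j <= m)%nat ->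
  weight j - weight m
  <= (if Rlt_dec (INR j) (exp ((1 - δ) * ln (INR m + 3))) then 1 else 0) + 8 * δ * weight m.
Proof.
  intros Hδ Hj.
  pose proof (weight_pos m). pose proof (weight_pos j).
  destruct Rlt_dec as [_ | Hbig]; [pose proof (weight_le1 j); nra|].
  pose proof (ln_shift3_ge1 j). pose proof (ln_shift3_ge1 m).
  set (l := ln (INR m + 3)) in *. set (x := ln (INR j + 3)) in *.
  assert (Hxl : (1 - δ) * l < x).
  { rewrite <- (ln_exp ((1 - δ) * l)). pose proof (pos_INR j).
    apply ln_increasing; [apply exp_pos | lra]. }
  assert (Hlx : x <= l).
  { assert (INR j <= INR m) by (apply le_INR; lia).
    apply ln_le; pose proof (pos_INR j); lra. }
  assert (l <= 2 * x) by nra.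
  assert ((l - x) * (l + x) <= δ * l * (2 * l)) by (apply Rmult_le_compat; nra).
  assert (δ * l ^ 2 <= δ * (4 * x ^ 2)) by (apply Rmult_le_compat_l; nra).
  assert (l ^ 2 <= (1 + 8 * δ) * x ^ 2) by nra.
  assert (weight j <= (1 + 8 * δ) * weight m) by (apply (inv_sqr_le_scaled x l); lra).
  lra.
Qed.

Lemma exp_ge_cube y : 0 <= y -> y ^ 3 / 27 <= exp y.
Proof.
  intros Hy.
  replace (exp y) with (exp (y / 3) ^ 3)
    by (simpl; rewrite Rmult_1_r, <- !exp_plus; f_equal; field).
  replace (y ^ 3 / 27) with ((y / 3) ^ 3) by field.
  apply pow_incr. pose proof (exp_ineq1_le (y / 3)). lra.
Qed.

Lemma sqr_le_exp_scaled η δ l : 0 < η -> 0 < δ -> 0 <= l -> 108 <= η * δ ^ 3 * l ->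
  4 * l ^ 2 <= η * exp (δ * l).
Proof.
  intros Hη Hδ Hl H108.
  pose proof (exp_ge_cube (δ * l) ltac:(nra)).
  assert (η * ((δ * l) ^ 3 / 27) <= η * exp (δ * l)) by (apply Rmult_le_compat_l; lra).
  assert (0 <= l ^ 2) by (apply pow_le; lra).
  nra.
Qed.

Lemma weights_flat η : 0 < η -> exists M, forall m : nat, M < INR m ->
  lsum (seq 1 m) (fun j => weight j - weight m) <= η * INR m * weight m.
Proof.
  intros Hη.
  set (δ := Rmin (1/2) (η/16)).
  assert (Hδ : 0 < δ <= 1/2) by (unfold δ, Rmin; destruct Rle_dec; lra).
  assert (Hδη : 8 * δ <= η / 2) by (pose proof (Rmin_r (1/2) (η/16)) as Hmin; fold δ in Hmin; lra).
  exists (exp (108 / (η * δ ^ 3)) + 3). intros m Hm.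
  eapply Rle_trans.
  { apply lsum_le. intros j Hj. apply in_seq in Hj. apply (weight_sub_le m j δ); [lra | lia]. }
  rewrite lsum_plus, lsum_const, length_seq.
  pose proof (ln_shift3_ge1 m). pose proof (weight_pos m).
  assert (Hexl : exp (ln (INR m + 3)) = INR m + 3) by (apply exp_ln; pose proof (pos_INR m); lra).
  set (l := ln (INR m + 3)) in *.
  set (X := exp ((1 - δ) * l)).
  pose proof (lsum_indicator_le m X (Rlt_le _ _ (exp_pos _))) as Hcount.
  assert (Hl : 108 / (η * δ ^ 3) < l).
  { rewrite <- (ln_exp (108 / (η * δ ^ 3))). apply ln_increasing; [apply exp_pos | lra]. }
  assert (Hm3 : 3 <= INR m) by (pose proof (exp_pos (108 / (η * δ ^ 3))); lra).
  assert (Hwl : weight m * l ^ 2 = 1) by (unfold weight; fold l; field; lra).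
  assert (HXe : X * exp (δ * l) = INR m + 3)
    by (unfold X; rewrite <- exp_plus, <- Hexl; f_equal; ring).
  assert (Hgrowth : 4 * l ^ 2 <= η * exp (δ * l)).
  { assert (0 < η * δ ^ 3) by (apply Rmult_lt_0_compat; [lra | apply pow_lt; lra]).
    apply sqr_le_exp_scaled; try lra.
    replace 108 with (108 / (η * δ ^ 3) * (η * δ ^ 3)) by (field; lra). nra. }
  assert (HX : X <= η / 2 * INR m * weight m).
  { assert (0 < X) by apply exp_pos.
    assert (X * (4 * l ^ 2) <= X * (η * exp (δ * l))) by (apply Rmult_le_compat_l; lra).
    assert (X * (4 * l ^ 2) * weight m <= 2 * η * INR m * weight m) by (apply Rmult_le_compat_r; nra).
    nra. }
  assert (INR m * (8 * δ * weight m) <= η / 2 * INR m * weight m).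
  { assert (8 * δ * weight m <= η / 2 * weight m) by (apply Rmult_le_compat_r; lra).
    pose proof (pos_INR m). nra. }
  lra.
Qed.

Definition grid_sum (g : R -> R) (m a n : nat) : R :=
  lsum (seq a n) (fun j => g (INR j / INR m)).

Lemma grid_point_range (j m : nat) : (j <= m)%nat -> 0 < INR m -> 0 <= INR j / INR m <= 1.
Proof.
  intros Hjm Hm. apply le_INR in Hjm. pose proof (pos_INR j). split.
  - apply Rdiv_le_0_compat; lra.
  - apply Rmult_le_reg_r with (INR m); [lra|].
    unfold Rdiv. rewrite Rmult_assoc, Rinv_l; lra.
Qed.

Definition lipschitz (h : R -> R) (L : R) : Prop :=
  forall x y, Rabs (h x - h y) <= L * Rabs (x - y).

Section Lipschitz.

Variables (h : R -> R) (L : R).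
Hypothesis hL : lipschitz h L.

Lemma lipschitz_const_nonneg : 0 <= L.
Proof.
  pose proof (hL 1 0) as H. pose proof (Rabs_pos (h 1 - h 0)).
  rewrite Rminus_0_r, Rabs_R1 in H. lra.
Qed.

Lemma lipschitz_continuous x : continuous h x.
Proof.
  pose proof lipschitz_const_nonneg.
  apply continuity_pt_filterlim. intros eps Heps.
  exists (eps / (L + 1)). split; [apply Rdiv_lt_0_compat; lra|].
  intros y [_ Hy]. simpl in *. unfold R_dist in *.
  eapply Rle_lt_trans; [apply hL|].
  apply Rle_lt_trans with (L * (eps / (L + 1))); [apply Rmult_le_compat_l; lra|].
  apply Rmult_lt_reg_r with (L + 1); [lra|].
  replace (L * (eps / (L + 1)) * (L + 1)) with (L * eps) by (field; lra). nra.
Qed.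

Lemma lipschitz_ex_RInt a b : ex_RInt h a b.
Proof. apply (@ex_RInt_continuous R_CompleteNormedModule). intros; apply lipschitz_continuous. Qed.

Lemma RInt_abs_le_const a b B : (forall x, Rabs (h x) <= B) ->
  Rabs (RInt h a b) <= Rabs (b - a) * B.
Proof.
  intros HB. destruct (Rle_dec a b) as [Hab | Hab].
  - rewrite (Rabs_pos_eq (b - a)) by lra.
    apply abs_RInt_le_const; auto using lipschitz_ex_RInt.
  - rewrite <- (opp_RInt_swap h b a) by apply lipschitz_ex_RInt.
    change (opp (RInt h b a)) with (- RInt h b a).
    rewrite Rabs_Ropp, (Rabs_minus_sym b a), (Rabs_pos_eq (a - b)) by lra.
    apply abs_RInt_le_const; auto using lipschitz_ex_RInt; lra.
Qed.

Lemma RInt_right_endpoint_error p q : p <= q ->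
  Rabs (h q * (q - p) - RInt h p q) <= L * (q - p) ^ 2.
Proof.
  intros Hpq.
  assert (E : RInt (fun t => h t - h q) p q = RInt h p q - (q - p) * h q).
  { rewrite (RInt_minus h (fun _ => h q)) by auto using lipschitz_ex_RInt, ex_RInt_const.
    rewrite RInt_const. reflexivity. }
  replace (h q * (q - p) - RInt h p q) with (- RInt (fun t => h t - h q) p q) by (rewrite E; ring).
  rewrite Rabs_Ropp.
  apply Rle_trans with ((q - p) * (L * (q - p))); [|right; ring].
  apply abs_RInt_le_const; [exact Hpq | |].
  - apply (@ex_RInt_minus R_CompleteNormedModule); auto using lipschitz_ex_RInt, ex_RInt_const.
  - intros t Ht. eapply Rle_trans; [apply hL|].
    pose proof lipschitz_const_nonneg.
    apply Rmult_le_compat_l; [lra|]. unfold Rabs; destruct Rcase_abs; lra.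
Qed.

Lemma riemann_sum_error (m : nat) a n : 0 < INR m ->
  Rabs (grid_sum h m (S a) n - INR m * RInt h (INR a / INR m) (INR (a + n) / INR m))
  <= INR n * L / INR m.
Proof.
  intros Hm. induction n as [|n IH].
  - rewrite Nat.add_0_r, RInt_point. unfold grid_sum, lsum; simpl.
    unfold zero; simpl. rewrite Rmult_0_r, Rminus_0_r, Rabs_R0. unfold Rdiv; lra.
  - set (p := INR (a + n) / INR m) in *. set (q := INR (a + S n) / INR m).
    assert (Hqp : q - p = / INR m)
      by (unfold q, p; replace (a + S n)%nat with (S (a + n)) by lia; rewrite S_INR; field; lra).
    unfold grid_sum. rewrite seq_S, lsum_app. fold (grid_sum h m (S a) n).
    unfold lsum; cbn [map fold_right].
    replace (S a + n)%nat with (a + S n)%nat by lia. fold q.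
    rewrite <- (RInt_Chasles h _ p q) by apply lipschitz_ex_RInt.
    assert (Hstep : Rabs (h q - INR m * RInt h p q) <= L / INR m).
    { pose proof (RInt_right_endpoint_error p q ltac:(pose proof (Rinv_0_lt_compat _ Hm); lra)) as S.
      rewrite Hqp in S.
      replace (h q - INR m * RInt h p q) with (INR m * (h q * / INR m - RInt h p q)) by (field; lra).
      rewrite Rabs_mult, Rabs_pos_eq by lra.
      apply Rmult_le_compat_l with (r := INR m) in S; [|lra].
      eapply Rle_trans; [exact S | right; field; lra]. }
    replace (INR (S n) * L / INR m) with (INR n * L / INR m + L / INR m) by (rewrite S_INR; field; lra).
    eapply Rle_trans; [|apply Rplus_le_compat; [exact IH | exact Hstep]].
    eapply Rle_trans; [|apply Rabs_triang]. right. f_equal. unfold plus; simpl. ring.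
Qed.

End Lipschitz.

Lemma grid_sum_tail_minus_head h L B (m k : nat) :
  lipschitz h L -> (forall x, Rabs (h x) <= B) -> 0 < INR m -> (k <= m)%nat ->
  INR m * (RInt h (1/2) 1 - RInt h 0 (1/2)) - 2 * B * Rabs (INR k - INR m / 2) - L
  <= grid_sum h m (S k) (m - k) - grid_sum h m 1 k.
Proof.
  intros hL hB Hm Hkm.
  pose proof (riemann_sum_error h L hL m 0 k Hm) as Hhead.
  pose proof (riemann_sum_error h L hL m k (m - k) Hm) as Htail.
  replace (k + (m - k))%nat with m in Htail by lia.
  simpl (0 + k)%nat in Hhead. simpl (INR 0) in Hhead.
  replace (0 / INR m) with 0 in Hhead by (field; lra).
  replace (INR m / INR m) with 1 in Htail by (field; lra).
  rewrite minus_INR in Htail by exact Hkm.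
  set (X := INR k / INR m) in *.
  assert (Hsplit : RInt h X 1 - RInt h 0 X
                   = RInt h (1/2) 1 - RInt h 0 (1/2) - 2 * RInt h (1/2) X).
  { rewrite <- (RInt_Chasles h 0 (1/2) X), <- (RInt_Chasles h (1/2) X 1)
      by apply (lipschitz_ex_RInt h L hL).
    unfold plus; simpl. ring. }
  assert (Hmid : INR m * Rabs (RInt h (1/2) X) <= B * Rabs (INR k - INR m / 2)).
  { replace (INR k - INR m / 2) with (INR m * (X - 1/2)) by (unfold X; field; lra).
    rewrite Rabs_mult, (Rabs_pos_eq (INR m)) by lra.
    pose proof (RInt_abs_le_const h L hL (1/2) X B hB).
    pose proof (Rabs_pos (X - 1/2)). nra. }
  assert (Hsum : INR k * L / INR m + (INR m - INR k) * L / INR m = L) by (field; lra).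
  apply Rabs_le_between' in Hhead. apply Rabs_le_between' in Htail.
  pose proof (Rle_abs (RInt h (1/2) X)). pose proof (Rle_abs (- RInt h (1/2) X)).
  rewrite Rabs_Ropp in *. nra.
Qed.

Lemma grid_sum_close g h r (m a n : nat) : 0 < INR m -> (a + n <= S m)%nat ->
  (forall x, 0 <= x <= 1 -> Rabs (g x - h x) <= r) ->
  Rabs (grid_sum g m a n - grid_sum h m a n) <= INR n * r.
Proof.
  intros Hm Han Hgh. unfold grid_sum.
  replace (INR n * r) with (lsum (seq a n) (fun _ => r)) by (rewrite lsum_const, length_seq; ring).
  rewrite <- lsum_minus.
  eapply Rle_trans; [apply lsum_abs | apply lsum_le].
  intros j Hj. apply in_seq in Hj. apply Hgh, grid_point_range; [lia | exact Hm].
Qed.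

Lemma weighted_grid_sum_approx g B (m a n : nat) : 0 < INR m -> (a + n <= S m)%nat ->
  (forall x, 0 <= x <= 1 -> Rabs (g x) <= B) ->
  Rabs (lsum (seq a n) (fun j => weight j * g (INR j / INR m)) - weight m * grid_sum g m a n)
  <= B * lsum (seq a n) (fun j => weight j - weight m).
Proof.
  intros Hm Han Hg. unfold grid_sum.
  rewrite <- !lsum_scal, <- lsum_minus.
  eapply Rle_trans; [apply lsum_abs | apply lsum_le].
  intros j Hj. apply in_seq in Hj.
  assert (weight m <= weight j) by (apply weight_antimono; lia).
  replace (weight j * g (INR j / INR m) - weight m * g (INR j / INR m))
    with ((weight j - weight m) * g (INR j / INR m)) by ring.
  rewrite Rabs_mult, Rabs_pos_eq, Rmult_comm by lra.
  apply Rmult_le_compat_r; [lra|]. apply Hg, grid_point_range; [lia | exact Hm].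
Qed.

Lemma wsum_tail_minus_head_grid_sum g B (m k : nat) : 0 < INR m -> (k <= m)%nat ->
  (forall x, 0 <= x <= 1 -> Rabs (g x) <= B) ->
  weight m * (grid_sum g m (S k) (m - k) - grid_sum g m 1 k)
    - B * lsum (seq 1 m) (fun j => weight j - weight m)
  <= wsum g m (S k) m - wsum g m 1 k.
Proof.
  intros Hm Hkm Hg.
  change (wsum g m (S k) m) with (lsum (seq (S k) (m - k)) (fun j => weight j * g (INR j / INR m))).
  change (wsum g m 1 k) with (lsum (seq 1 (k - 0)) (fun j => weight j * g (INR j / INR m))).
  rewrite Nat.sub_0_r.
  replace (seq 1 m) with (seq 1 k ++ seq (S k) (m - k))
    by (rewrite <- seq_app; f_equal; lia).
  rewrite lsum_app.
  pose proof (weighted_grid_sum_approx g B m 1 k Hm ltac:(lia) Hg) as Hhead.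
  pose proof (weighted_grid_sum_approx g B m (S k) (m - k) Hm ltac:(lia) Hg) as Htail.
  apply Rabs_le_between' in Hhead. apply Rabs_le_between' in Htail.
  lra.
Qed.

Lemma wsum_tail_minus_head_ge g h L B r (m k : nat) :
  lipschitz h L -> (forall x, Rabs (h x) <= B) -> (forall x, 0 <= x <= 1 -> Rabs (g x) <= B) ->
  (forall x, 0 <= x <= 1 -> Rabs (g x - h x) <= r) -> 0 < INR m -> (k <= m)%nat ->
  weight m * (INR m * (RInt h (1/2) 1 - RInt h 0 (1/2) - r) - 2 * B * Rabs (INR k - INR m / 2) - L)
    - B * lsum (seq 1 m) (fun j => weight j - weight m)
  <= wsum g m (S k) m - wsum g m 1 k.
Proof.
  intros hL hB Hg Hgh Hm Hkm.
  pose proof (grid_sum_tail_minus_head h L B m k hL hB Hm Hkm) as Hbalance.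
  pose proof (grid_sum_close g h r m 1 k Hm ltac:(lia) Hgh) as Chead.
  pose proof (grid_sum_close g h r m (S k) (m - k) Hm ltac:(lia) Hgh) as Ctail.
  pose proof (wsum_tail_minus_head_grid_sum g B m k Hm Hkm Hg) as Hweighted.
  rewrite minus_INR in Ctail by exact Hkm.
  apply Rabs_le_between' in Chead. apply Rabs_le_between' in Ctail.
  pose proof (weight_pos m).
  assert (INR m * (RInt h (1/2) 1 - RInt h 0 (1/2) - r) - 2 * B * Rabs (INR k - INR m / 2) - L
          <= grid_sum g m (S k) (m - k) - grid_sum g m 1 k) by lra.
  assert (weight m * (INR m * (RInt h (1/2) 1 - RInt h 0 (1/2) - r)
                      - 2 * B * Rabs (INR k - INR m / 2) - L)
          <= weight m * (grid_sum g m (S k) (m - k) - grid_sum g m 1 k))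
    by (apply Rmult_le_compat_l; lra).
  lra.
Qed.

Definition clamp01 (x : R) : R := Rmax 0 (Rmin 1 x).

Lemma clamp01_id x : 0 <= x <= 1 -> clamp01 x = x.
Proof. unfold clamp01, Rmax, Rmin; repeat destruct Rle_dec; lra. Qed.

Lemma clamp01_range x : 0 <= clamp01 x <= 1.
Proof. unfold clamp01, Rmax, Rmin; repeat destruct Rle_dec; lra. Qed.

Lemma clamp01_lipschitz : lipschitz clamp01 1.
Proof.
  intros x y. rewrite Rmult_1_l.
  unfold clamp01, Rmax, Rmin, Rabs; repeat destruct Rle_dec; repeat destruct Rcase_abs; lra.
Qed.

(* Clamping to [0,1] gives a globally Lipschitz extension, to which Coquelicot's
   integrability results for continuous functions apply up to the endpoints. *)
Lemma lipschitz01_extension f B : lipschitz01 f -> (forall x, 0 <= x <= 1 -> Rabs (f x) <= B) ->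
  exists h L, lipschitz h L /\ (forall x, Rabs (h x) <= B) /\ (forall x, 0 <= x <= 1 -> h x = f x).
Proof.
  intros [L HL] Hf. exists (fun x => f (clamp01 x)), L.
  split; [|split].
  - intros x y. eapply Rle_trans; [apply HL; apply clamp01_range|].
    pose proof (clamp01_lipschitz x y). pose proof (Rabs_pos (clamp01 x - clamp01 y)).
    pose proof (HL 0 1 ltac:(lra) ltac:(lra)) as HL01.
    rewrite Rminus_0_l, Rabs_Ropp, Rabs_R1 in HL01.
    pose proof (Rabs_pos (f 0 - f 1)). nra.
  - intros x. apply Hf, clamp01_range.
  - intros x Hx. rewrite clamp01_id by exact Hx. reflexivity.
Qed.

Lemma RInt_ext01 (f h : R -> R) a b : 0 <= a <= 1 -> 0 <= b <= 1 ->
  (forall x, 0 <= x <= 1 -> h x = f x) -> RInt h a b = RInt f a b.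
Proof.
  intros Ha Hb Hhf. apply (@RInt_ext R_CompleteNormedModule). intros x Hx.
  assert (0 <= Rmin a b) by (apply Rmin_glb; lra).
  assert (Rmax a b <= 1) by (apply Rmax_lub; lra).
  apply Hhf. lra.
Qed.

Definition tail_dominates (M eps : R) (g : R -> R) : Prop :=
  forall m k : nat, M < INR m -> (1/2 - eps) * INR m < INR k < (1/2 + eps) * INR m ->
    wsum g m 1 k < wsum g m (S k) m.

Lemma tail_dominates_mono M eps M' eps' g :
  tail_dominates M eps g -> M <= M' -> 0 < eps' <= eps -> tail_dominates M' eps' g.
Proof.
  intros H HM Heps m k Hm Hk. apply H; [lra|].
  pose proof (pos_INR m).
  assert (eps' * INR m <= eps * INR m) by (apply Rmult_le_compat_r; lra).
  lra.
Qed.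

Lemma tail_dominates_near f B :
  0 < B -> (forall x, 0 <= x <= 1 -> Rabs (f x) <= B) -> lipschitz01 f ->
  0 < RInt f (1/2) 1 - RInt f 0 (1/2) ->
  exists M eps, 0 < M /\ 0 < eps /\
    forall g, (forall x, 0 <= x <= 1 -> Rabs (g x) <= B) ->
      unif_ball f ((RInt f (1/2) 1 - RInt f 0 (1/2)) / 4) g -> tail_dominates M eps g.
Proof.
  intros HB Hf Hlip Hd.
  set (d := RInt f (1/2) 1 - RInt f 0 (1/2)) in *.
  destruct (lipschitz01_extension f B Hlip Hf) as [h [L [hL [hB hf]]]].
  assert (hd : RInt h (1/2) 1 - RInt h 0 (1/2) = d)
    by (unfold d; rewrite !(RInt_ext01 f h) by (auto; lra); reflexivity).
  pose proof (lipschitz_const_nonneg h L hL).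
  destruct (weights_flat (d / (8 * B))) as [M0 HM0]; [apply Rdiv_lt_0_compat; lra|].
  set (eps := Rmin (1/4) (d / (8 * B))).
  assert (Heps : 0 < eps)
    by (unfold eps, Rmin; destruct Rle_dec; [lra | apply Rdiv_lt_0_compat; lra]).
  assert (Heps4 : eps <= 1/4) by apply Rmin_l.
  assert (HepsB : 2 * B * eps <= d / 4).
  { apply Rle_trans with (2 * B * (d / (8 * B))); [|right; field; lra].
    apply Rmult_le_compat_l; [lra | apply Rmin_r]. }
  set (M := Rmax M0 (Rmax (8 * L / d) 1)).
  pose proof (Rmax_l M0 (Rmax (8 * L / d) 1)). pose proof (Rmax_r M0 (Rmax (8 * L / d) 1)).
  pose proof (Rmax_l (8 * L / d) 1). pose proof (Rmax_r (8 * L / d) 1).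
  exists M, eps. split; [unfold M; lra | split; [exact Heps|]].
  intros g Hg [r [Hr Hfg]] m k Hm Hk.
  assert (Hm0 : 0 < INR m) by (unfold M in Hm; lra).
  assert (HLm : L < INR m * d / 8).
  { replace L with (8 * L / d * (d / 8)) by (field; lra).
    replace (INR m * d / 8) with (INR m * (d / 8)) by field.
    apply Rmult_lt_compat_r; [|unfold M in Hm]; lra. }
  assert (Hkm : (k <= m)%nat) by (apply INR_le; nra).
  assert (Hcentre : 2 * B * Rabs (INR k - INR m / 2) <= INR m * d / 4).
  { assert (Rabs (INR k - INR m / 2) <= eps * INR m) by (apply Rabs_le; nra).
    apply Rle_trans with (2 * B * (eps * INR m)); [apply Rmult_le_compat_l; lra | nra]. }
  assert (Hgh : forall x, 0 <= x <= 1 -> Rabs (g x - h x) <= r).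
  { intros x Hx. rewrite hf, Rabs_minus_sym by exact Hx. apply Hfg, Hx. }
  pose proof (wsum_tail_minus_head_ge g h L B r m k hL hB Hg Hgh Hm0 Hkm) as Hlower.
  specialize (HM0 m ltac:(unfold M in Hm; lra)).
  rewrite hd in Hlower.
  pose proof (weight_pos m).
  assert (INR m * r <= INR m * (d / 4)) by (apply Rmult_le_compat_l; lra).
  assert (Hbracket : INR m * d / 4
                     < INR m * (d - r) - 2 * B * Rabs (INR k - INR m / 2) - L) by lra.
  assert (B * lsum (seq 1 m) (fun j => weight j - weight m) <= INR m * d / 8 * weight m).
  { apply Rle_trans with (B * (d / (8 * B) * INR m * weight m)); [|right; field; lra].
    apply Rmult_le_compat_l; lra. }
  assert (0 < INR m * d * weight m) by (apply Rmult_lt_0_compat; [apply Rmult_lt_0_compat|]; lra).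
  apply (Rmult_lt_compat_l (weight m)) in Hbracket; [|lra].
  lra.
Qed.

Lemma unif_ball_open f r : unif_open (unif_ball f r).
Proof.
  intros g [s [Hs Hfg]]. exists (r - s). split; [lra|].
  intros h [t [Ht Hgh]]. exists (s + t). split; [lra|].
  intros x Hx. replace (f x - h x) with ((f x - g x) + (g x - h x)) by ring.
  eapply Rle_trans; [apply Rabs_triang|].
  pose proof (Hfg x Hx). pose proof (Hgh x Hx). lra.
Qed.

Section CompactUniform.

Variable F : (R -> R) -> Prop.
Variable P : R -> R -> (R -> R) -> Prop.
Hypothesis P_mono :
  forall M eps M' eps' g, P M eps g -> M <= M' -> 0 < eps' <= eps -> P M' eps' g.

Lemma uniform_bounds_on_list {I : Type} (U : I -> (R -> R) -> Prop) (l : list I) :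
  (forall i, exists M eps, 0 < M /\ 0 < eps /\ forall g, F g -> U i g -> P M eps g) ->
  exists M eps, 0 < M /\ 0 < eps /\ forall i, In i l -> forall g, F g -> U i g -> P M eps g.
Proof.
  intros Hi. induction l as [|i l IH].
  - exists 1, 1. split; [lra | split; [lra | intros i []]].
  - destruct IH as [M1 [eps1 [HM1 [Heps1 H1]]]].
    destruct (Hi i) as [M2 [eps2 [HM2 [Heps2 H2]]]].
    assert (0 < Rmin eps1 eps2) by (unfold Rmin; destruct Rle_dec; lra).
    exists (Rmax M1 M2), (Rmin eps1 eps2).
    split; [eapply Rlt_le_trans; [exact HM1 | apply Rmax_l] | split; [assumption|]].
    intros j [<- | Hj] g Fg HU.
    + eapply P_mono; [exact (H2 g Fg HU) | apply Rmax_r | split; [lra | apply Rmin_r]].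
    + eapply P_mono; [exact (H1 j Hj g Fg HU) | apply Rmax_l | split; [lra | apply Rmin_l]].
Qed.

Lemma compact_uniform_bounds : unif_compact F ->
  (forall f, F f -> exists r M eps, 0 < r /\ 0 < M /\ 0 < eps /\
     forall g, F g -> unif_ball f r g -> P M eps g) ->
  exists M eps, 0 < M /\ 0 < eps /\ forall g, F g -> P M eps g.
Proof.
  intros Hcomp Hloc.
  set (local f r := exists M eps, 0 < M /\ 0 < eps /\
         forall g, F g -> unif_ball f r g -> P M eps g).
  set (U := fun (i : (R -> R) * R) g => local (fst i) (snd i) /\ unif_ball (fst i) (snd i) g).
  destruct (Hcomp _ U) as [l Hl].
  - intros [f r] g [Hfr Hb]. destruct (unif_ball_open f r g Hb) as [s [Hs Hsub]].
    exists s. split; [exact Hs|]. intros h Hh. split; [exact Hfr | exact (Hsub h Hh)].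
  - intros f Ff. destruct (Hloc f Ff) as [r [M [eps [Hr Hmeps]]]].
    exists (f, r). split; [exists M, eps; exact Hmeps|].
    exists 0. split; [exact Hr|]. intros x _. rewrite Rminus_diag, Rabs_R0. lra.
  - destruct (uniform_bounds_on_list U l) as [M [eps [HM [Heps H]]]].
    + intros [f r]. destruct (classic (local f r)) as [[M [eps [HM [Heps H]]]] | Hnot].
      * exists M, eps. split; [exact HM | split; [exact Heps|]].
        intros g Fg [_ Hb]. exact (H g Fg Hb).
      * exists 1, 1. split; [lra | split; [lra|]]. intros g _ [Hfr _]. contradiction.
    + exists M, eps. split; [exact HM | split; [exact Heps|]].
      intros g Fg. destruct (Hl g Fg) as [i [Hi HU]]. exact (H i Hi g Fg HU).
Qed.

End CompactUniform.

Theorem claim13 (F : (R -> R) -> Prop) :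
  unif_compact F ->
  (exists B : R, forall f, F f -> forall x, 0 <= x <= 1 -> Rabs (f x) <= B) ->
  (forall f, F f -> lipschitz01 f) ->
  (forall f, F f -> RInt f 0 (1/2) < RInt f (1/2) 1) ->
  exists M eps : R, 0 < M /\ 0 < eps /\
    forall (m mstar : nat), M < INR m ->
      (1/2 - eps) * INR m < INR mstar < (1/2 + eps) * INR m ->
      forall f, F f -> wsum f m 1 mstar < wsum f m (S mstar) m.
Proof.
  intros Hcomp [B0 HB0] Hlip Hgap.
  set (B := Rabs B0 + 1).
  assert (HBpos : 0 < B) by (pose proof (Rabs_pos B0); unfold B; lra).
  assert (HB : forall f, F f -> forall x, 0 <= x <= 1 -> Rabs (f x) <= B).
  { intros f Ff x Hx. pose proof (HB0 f Ff x Hx). pose proof (Rle_abs B0). unfold B; lra. }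
  destruct (compact_uniform_bounds F tail_dominates tail_dominates_mono Hcomp)
    as [M [eps [HM [Heps Hunif]]]].
  - intros f Ff. pose proof (Hgap f Ff).
    destruct (tail_dominates_near f B HBpos (HB f Ff) (Hlip f Ff) ltac:(lra))
      as [M [eps [HM [Heps Hnear]]]].
    exists ((RInt f (1/2) 1 - RInt f 0 (1/2)) / 4), M, eps.
    split; [lra | split; [exact HM | split; [exact Heps|]]].
    intros g Fg. apply Hnear, HB, Fg.
  - exists M, eps. split; [exact HM | split; [exact Heps|]].
    intros m k Hm Hk f Ff. exact (Hunif f Ff m k Hm Hk).
Qed.
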